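(* Let $Y$ be any uniformly monotone Banach function space. Then the pair $(c_0,Y)$ has the Bishop-Phelps-Bollobás property for positive operators. Moreover, the function $\eta$ in the definition of this property can be chosen depending only on the modulus of uniform monotonicity of $Y$.
   Context: All spaces are real; $c_0$ carries the sup norm and coordinatewise order. For a Banach space $X$, $B_X$ and $S_X$ denote the closed unit ball and unit sphere; $L(X,Y)$ is the space of bounded linear operators with the operator norm. An operator $T$ between Banach lattices is positive if $x\ge0$ implies $Tx\ge 0$. A Banach space $Y$ is a Banach function space on a measure space $(\Omega,\nu)$ if $Y$ is an ideal in the space $L^0(\nu)$ of (a.e. classes of) real measurable functions on $\Omega$ and $|x|\le|y|$ a.e. with $x,y\in Y$ implies $\Vert x\Vert\le\Vert y\Vert$. A Banach lattice $E$ is uniformly monotone if for every $\varepsilon>0$ there is $\delta(\varepsilon)>0$ (the modulus of uniform monotonicity) such that whenever $x\in S_E$, $y\in E$, $x,y\ge0$, and $\Vert x+y\Vert\le 1+\delta(\varepsilon)$, then $\Vert y\Vert\le\varepsilon$. A pair $(X,Y)$ of Banach lattices has the Bishop-Phelps-Bollobás property for positive operators if for every $0<\varepsilon<1$ there exists $0<\eta(\varepsilon)<\varepsilon$ such that for every positive $S\in S_{L(X,Y)}$ and every $x_0\in S_X$ with $\Vert S(x_0)\Vert>1-\eta(\varepsilon)$, there exist $u_0\in S_X$ and a positive operator $T\in S_{L(X,Y)}$ with $\Vert T(u_0)\Vert=1$, $\Vert u_0-x_0\Vert<\varepsilon$ and $\Vert T-S\Vert<\varepsilon$. *)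

From HB Require Import structures.
From mathcomp Require Import all_boot all_order all_algebra.
From mathcomp Require Import all_classical all_reals all_analysis.
Set Implicit Arguments. Unset Strict Implicit. Unset Printing Implicit Defensive.
Import Order.TTheory GRing.Theory Num.Theory.
Import numFieldNormedType.Exports.
Local Open Scope classical_set_scope.
Local Open Scope ring_scope.

Definition c0 {R : realType} : set (nat -> R) :=
  [set x | (x : R^nat) @ \oo --> (0 : R)].

Definition c0norm {R : realType} (x : nat -> R) : R :=
  sup [set `|x n| | n in [set: nat]].

(* A Banach function space on (Omega, nu): a set [mem] of measurable
   functions (representatives of a.e.-classes in L^0(nu)) that is a linear
   subspace and an ideal of L^0(nu), with a lattice norm [nrm] (monotone for
   |x| <= |y| a.e., hence invariant under a.e. equality), which is a norm on
   the a.e.-classes and is complete. *)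
Record BFS (R : realType) (d : measure_display) (T : measurableType d)
    (mu : {measure set T -> \bar R}) := {
  bfs_mem : set (T -> R) ;
  bfs_nrm : (T -> R) -> R ;
  bfs_meas : forall f : T -> R, bfs_mem f -> measurable_fun [set: T] f ;
  bfs_mem0 : bfs_mem (fun _ => 0) ;
  bfs_memD : forall f g : T -> R, bfs_mem f -> bfs_mem g -> bfs_mem (fun w => f w + g w) ;
  bfs_memZ : forall (a : R) (f : T -> R), bfs_mem f -> bfs_mem (fun w => a * f w) ;
  bfs_ideal : forall f g : T -> R, bfs_mem g -> measurable_fun [set: T] f ->
      {ae mu, forall w, `|f w| <= `|g w|} -> bfs_mem f ;
  bfs_nrm_mono : forall f g : T -> R, bfs_mem f -> bfs_mem g ->
      {ae mu, forall w, `|f w| <= `|g w|} -> bfs_nrm f <= bfs_nrm g ;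
  bfs_nrm_ge0 : forall f : T -> R, bfs_mem f -> 0 <= bfs_nrm f ;
  bfs_nrm_eq0 : forall f : T -> R, bfs_mem f -> bfs_nrm f = 0 ->
      {ae mu, forall w, f w = 0} ;
  bfs_nrmZ : forall (a : R) (f : T -> R), bfs_mem f ->
      bfs_nrm (fun w => a * f w) = `|a| * bfs_nrm f ;
  bfs_nrmD : forall f g : T -> R, bfs_mem f -> bfs_mem g ->
      bfs_nrm (fun w => f w + g w) <= bfs_nrm f + bfs_nrm g ;
  bfs_complete : forall u : nat -> T -> R, (forall n, bfs_mem (u n)) ->
      (forall e : R, 0 < e -> exists N : nat, forall m n : nat, (N <= m)%N ->
          (N <= n)%N -> bfs_nrm (fun w => u m w - u n w) < e) ->
      exists f, bfs_mem f /\ (forall e : R, 0 < e -> exists N : nat,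
          forall n : nat, (N <= n)%N -> bfs_nrm (fun w => u n w - f w) < e)
}.

Arguments bfs_mem {R d T mu}.
Arguments bfs_nrm {R d T mu}.

(* Uniform monotonicity of Y with modulus delta (the lattice order of Y is
   the a.e. pointwise order). *)
Definition unif_monotone_with {R : realType} {d} {T : measurableType d}
    {mu : {measure set T -> \bar R}} (Y : BFS mu) (delta : R -> R) : Prop :=
  (forall e : R, 0 < e -> 0 < delta e) /\
  forall (e : R) (x y : T -> R), 0 < e ->
    bfs_mem Y x -> bfs_nrm Y x = 1 -> bfs_mem Y y ->
    {ae mu, forall w, 0 <= x w} -> {ae mu, forall w, 0 <= y w} ->
    bfs_nrm Y (fun w => x w + y w) <= 1 + delta e ->
    bfs_nrm Y y <= e.

(* An operator is given by representatives: Op x : T -> R for x in c_0. *)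
Definition is_op {R : realType} {d} {T : measurableType d}
    {mu : {measure set T -> \bar R}} (Y : BFS mu)
    (Op : (nat -> R) -> T -> R) : Prop :=
  (forall x, c0 x -> bfs_mem Y (Op x)) /\
  (forall (a b : R) x y, c0 x -> c0 y ->
     {ae mu, forall w, Op (fun n => a * x n + b * y n) w = a * Op x w + b * Op y w}) /\
  (exists M : R, forall x, c0 x -> bfs_nrm Y (Op x) <= M * c0norm x).

Definition is_pos_op {R : realType} {d} {T : measurableType d}
    {mu : {measure set T -> \bar R}} (Op : (nat -> R) -> T -> R) : Prop :=
  forall x, c0 x -> (forall n, 0 <= x n) -> {ae mu, forall w, 0 <= Op x w}.

Definition opnorm {R : realType} {d} {T : measurableType d}
    {mu : {measure set T -> \bar R}} (Y : BFS mu)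
    (Op : (nat -> R) -> T -> R) : R :=
  sup [set bfs_nrm Y (Op x) | x in [set x | c0 x /\ c0norm x <= 1]].

Definition BPBp_pos_with {R : realType} {d} {T : measurableType d}
    {mu : {measure set T -> \bar R}} (Y : BFS mu) (eta : R -> R) : Prop :=
  forall (e : R), 0 < e < 1 ->
  forall (S : (nat -> R) -> T -> R) (x0 : nat -> R),
    is_op Y S -> is_pos_op (mu := mu) S -> opnorm Y S = 1 ->
    c0 x0 -> c0norm x0 = 1 ->
    bfs_nrm Y (S x0) > 1 - eta e ->
    exists (u0 : nat -> R) (Op : (nat -> R) -> T -> R),
      c0 u0 /\ c0norm u0 = 1 /\
      is_op Y Op /\ is_pos_op (mu := mu) Op /\ opnorm Y Op = 1 /\
      bfs_nrm Y (Op u0) = 1 /\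
      c0norm (fun n => u0 n - x0 n) < e /\
      opnorm Y (fun x w => Op x w - S x w) < e.

From mathcomp Require Import all_boot all_order all_algebra.
From mathcomp Require Import all_classical all_reals all_analysis.
From mathcomp Require Import ring lra.
Import Order.TTheory GRing.Theory Num.Theory.
Local Open Scope classical_set_scope.
Local Open Scope ring_scope.

(* Let A+ (resp. A-) be the coordinates where x0 > 1 - rho (resp. x0 < rho - 1) and let u0
   be x0 pushed to 1 on A+ and to -1 on A-, so that ||u0|| = 1 and ||u0 - x0|| <= rho.
   The operator T' that keeps, on the set where S x0 >= 0, only the part of S living on A+,
   and elsewhere only the part living on A-, satisfies |T' u0| = T' 1_(A+ u A-); hence
   T = T' / c with c = ||T' 1_(A+ u A-)|| is positive, of norm one and attains its norm
   at u0.  On the unit ball T' - S is, up to sign, S restricted to the complement of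
   A+ u A- plus a term dominated by min(S x0^+, S x0^-) / (1 - rho).  Both are small by
   uniform monotonicity of Y, since each can be added to a positive vector of norm at least
   ||S x0|| > 1 - eta without leaving the unit ball; this also forces c to be close to 1. *)

Definition ones (R : realType) : nat -> R := fun _ => 1.

(** * Sequences in c_0 *)

Section C0.
Context {R : realType}.
Implicit Types x y : nat -> R.

Lemma c0P x : c0 x <-> (forall e : R, 0 < e -> \forall n \near \oo, `|x n| < e).
Proof. exact: (cvgr0Pnorm_lt (F := \oo) x). Qed.

Lemma c0_le {x y} : c0 y -> (forall n, `|x n| <= `|y n|) -> c0 x.
Proof.
move=> /c0P Hy Hxy; apply/c0P => e e0.
by apply: filterS (Hy e e0) => n; apply: le_lt_trans.
Qed.

Lemma c0_cst0 : c0 (fun _ : nat => 0 : R).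
Proof. by apply/c0P => e e0; apply: nearW => n; rewrite normr0. Qed.

Lemma c0D {x y} : c0 x -> c0 y -> c0 (fun n => x n + y n).
Proof.
move=> /c0P Hx /c0P Hy; apply/c0P => e e0.
have e20 : 0 < e / 2 by rewrite divr_gt0.
apply: filterS2 (Hx _ e20) (Hy _ e20) => n h1 h2.
by rewrite (le_lt_trans (ler_normD _ _)) // [e](splitr e) ltrD.
Qed.

Lemma c0Z (a : R) {x} : c0 x -> c0 (fun n => a * x n).
Proof.
move=> /c0P Hx; apply/c0P => e e0.
have a1 : 0 < `|a| + 1 by rewrite ltr_wpDl.
apply: filterS (Hx (e / (`|a| + 1)) (divr_gt0 e0 a1)) => n hn.
rewrite normrM (@le_lt_trans _ _ ((`|a| + 1) * `|x n|)) //.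
  by rewrite ler_wpM2r // lerDl.
by rewrite -ltr_pdivlMl // mulrC.
Qed.

Lemma c0B {x y} : c0 x -> c0 y -> c0 (fun n => x n - y n).
Proof.
move=> cx cy; have := c0D cx (c0Z (-1) cy).
by under [fun n => _ + _]funext => n do rewrite mulN1r.
Qed.

Lemma c0_normr {x} : c0 x -> c0 (fun n => `|x n|).
Proof. by move=> h; apply: c0_le h _ => n; rewrite normr_id. Qed.

Lemma normr_max0_le (a : R) : `|Num.max a 0| <= `|a|.
Proof. by rewrite maxEle; case: ifPn; rewrite ?normr0. Qed.

Lemma c0_funrpos {x} : c0 x -> c0 x^\+.
Proof. by move=> h; apply: c0_le h _ => n; apply: normr_max0_le. Qed.

Lemma c0_funrneg {x} : c0 x -> c0 x^\-.
Proof.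
move=> h; apply: c0_le (c0Z (-1) h) _ => n; rewrite mulN1r.
exact: normr_max0_le.
Qed.

Lemma funrposDneg_at x n : x^\+ n + x^\- n = `|x n|.
Proof. exact: (congr1 (fun f => f n) (funrposDneg x)). Qed.

Lemma funrposBneg_at x n : x^\+ n - x^\- n = x n.
Proof. exact: (congr1 (fun f => f n) (funrposBneg x)). Qed.

Lemma c0_bounded {x} : c0 x -> exists M : R, forall n, `|x n| <= M.
Proof.
move=> /c0P /(_ 1 ltr01) [N _ HN].
exists (\sum_(k < N) `|x k| + 1) => n.
have sum_ge0 : 0 <= \sum_(k < N) `|x k| by rewrite sumr_ge0.
case: (ltnP n N) => hn; last by rewrite ltW // (lt_le_trans (HN n _)) // lerDr.
rewrite (@le_trans _ _ (\sum_(k < N) `|x k|)) ?lerDl // (bigD1 (Ordinal hn)) //=.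
by rewrite lerDl sumr_ge0.
Qed.

Lemma c0norm_has_sup {x} : c0 x -> has_sup [set `|x n| | n in [set: nat]].
Proof.
move=> /c0_bounded [M HM].
by split; [exists `|x 0%N|, 0%N | exists M => _ [k _ <-]].
Qed.

Lemma c0norm_ub {x} n : c0 x -> `|x n| <= c0norm x.
Proof. by move=> /c0norm_has_sup [_ ?]; apply: ub_le_sup => //; exists n. Qed.

Lemma c0norm_le x (b : R) : (forall n, `|x n| <= b) -> c0norm x <= b.
Proof.
move=> H; apply: ge_sup; first by exists `|x 0%N|, 0%N.
by move=> _ [k _ <-].
Qed.

Lemma c0norm_ge0 {x} : c0 x -> 0 <= c0norm x.
Proof. by move=> h; exact: le_trans (normr_ge0 (x 0%N)) (c0norm_ub 0%N h). Qed.

Lemma c0norm_adherent {x} (e : R) : c0 x -> 0 < e -> exists n, c0norm x - e < `|x n|.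
Proof.
move=> cx e0; have [_ [n _ <-] hn] := sup_adherent e0 (c0norm_has_sup cx).
by exists n.
Qed.

Definition restr (P : pred nat) x n := if P n then x n else 0.

Lemma normr_restr_le P x n : `|restr P x n| <= `|x n|.
Proof. by rewrite /restr; case: (P n); rewrite ?normr0. Qed.

Lemma c0_restr P {x} : c0 x -> c0 (restr P x).
Proof. by move=> cx; apply: c0_le cx _ => n; apply: normr_restr_le. Qed.

Lemma restr_lin P (a b : R) x y :
  restr P (fun n => a * x n + b * y n) = fun n => a * restr P x n + b * restr P y n.
Proof. by apply: funext => n; rewrite /restr; case: (P n); rewrite ?mulr0 ?addr0. Qed.

End C0.

Lemma restr_ones01 (R : realType) P n : 0 <= restr P (ones R) n <= 1.
Proof. by rewrite /restr /ones; case: (P n); rewrite ?lexx ?ler01. Qed.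


(** * Banach function spaces *)

Section BanachFunctionSpace.
Context {R : realType} {d : measure_display} {T : measurableType d}
  {mu : {measure set T -> \bar R}} {Y : BFS mu}.
Local Notation mem := (bfs_mem Y).
Local Notation nrm := (bfs_nrm Y).
Implicit Types f g : T -> R.

Lemma nrm_ae_eq {f g} : mem f -> mem g -> {ae mu, forall w, f w = g w} -> nrm f = nrm g.
Proof.
move=> mf mg fg; apply/le_anti/andP; split; apply: bfs_nrm_mono => //;
  by apply: filterS fg => w ->.
Qed.

Lemma memN {f} : mem f -> mem (fun w => - f w).
Proof.
move=> mf; have := bfs_memZ (-1) mf.
by under [fun w => _]funext => w do rewrite mulN1r.
Qed.

Lemma nrmN {f} : mem f -> nrm (fun w => - f w) = nrm f.
Proof.
move=> mf; have := bfs_nrmZ (-1) mf.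
under [fun w => _]funext => w do rewrite mulN1r.
by rewrite normrN normr1 mul1r.
Qed.

Lemma memB {f g} : mem f -> mem g -> mem (fun w => f w - g w).
Proof. by move=> mf mg; exact: (bfs_memD mf (memN mg)). Qed.

Lemma nrmB {f g} : mem f -> mem g -> nrm (fun w => f w - g w) <= nrm f + nrm g.
Proof. by move=> mf mg; rewrite -(nrmN mg); exact: (bfs_nrmD mf (memN mg)). Qed.

Lemma mem_normr {f} : mem f -> mem (fun w => `|f w|).
Proof.
move=> mf; apply: (bfs_ideal mf).
  exact: measurableT_comp (@measurable_realfun.normr_measurable R _) (bfs_meas mf).
by apply: aeW => w; rewrite normr_id.
Qed.

Lemma nrm_normr {f} : mem f -> nrm (fun w => `|f w|) = nrm f.
Proof.
move=> mf; apply/le_anti/andP; split; apply: bfs_nrm_mono => //;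
  try exact: mem_normr; by apply: aeW => w; rewrite normr_id.
Qed.

Lemma mem_mul_bounded {p f : T -> R} : measurable_fun setT p -> (forall w, `|p w| <= 1) ->
  mem f -> mem (fun w => p w * f w).
Proof.
move=> mp hp mf; apply: (bfs_ideal mf).
  exact: measurable_realfun.measurable_funM mp (bfs_meas mf).
by apply: aeW => w; rewrite normrM -[X in _ <= X]mul1r ler_wpM2r.
Qed.

Lemma nrm_le_scale {f g} (a : R) : mem f -> mem g -> 0 <= a ->
  {ae mu, forall w, `|f w| <= a * g w} -> nrm f <= a * nrm g.
Proof.
move=> mf mg a0 fg; rewrite -[a in a * _]ger0_norm // -bfs_nrmZ //.
apply: bfs_nrm_mono (bfs_memZ a mg) _ => //.
by apply: filterS fg => w h; rewrite (le_trans h) ?ler_norm.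
Qed.

Lemma unif_monotone_le {delta e f g} : unif_monotone_with Y delta -> 0 < e ->
  mem f -> mem g -> {ae mu, forall w, 0 <= f w} -> {ae mu, forall w, 0 <= g w} ->
  0 < nrm f -> nrm (fun w => f w + g w) <= (1 + delta e) * nrm f ->
  nrm g <= e * nrm f.
Proof.
move=> [_ hU] e0 mf mg f0 g0 nf0 nfg.
have inv_gt0 : 0 < (nrm f)^-1 by rewrite invr_gt0.
have nrm_scale h : mem h -> nrm (fun w => (nrm f)^-1 * h w) = (nrm f)^-1 * nrm h.
  by move=> mh; rewrite bfs_nrmZ // gtr0_norm.
have scale_ge0 h : {ae mu, forall w, 0 <= h w} -> {ae mu, forall w, 0 <= (nrm f)^-1 * h w}.
  by apply: filterS => w h0; rewrite mulr_ge0 // ltW.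
have nrm_f_scaled : nrm (fun w => (nrm f)^-1 * f w) = 1 by rewrite nrm_scale // mulVf ?gt_eqF.
have nrm_sum_scaled : nrm (fun w => (nrm f)^-1 * f w + (nrm f)^-1 * g w) <= 1 + delta e.
  under [fun w => _]funext => w do rewrite -mulrDr.
  rewrite nrm_scale; last exact: bfs_memD.
  by rewrite mulrC ler_pdivrMr.
have := hU e _ _ e0 (bfs_memZ _ mf) nrm_f_scaled (bfs_memZ _ mg) (scale_ge0 _ f0)
  (scale_ge0 _ g0) nrm_sum_scaled.
by rewrite nrm_scale // mulrC ler_pdivrMr.
Qed.

End BanachFunctionSpace.

(** * Positive operators on c_0 *)

Section PositiveOperator.
Context {R : realType} {d : measure_display} {T : measurableType d}
  {mu : {measure set T -> \bar R}} {Y : BFS mu}.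
Local Notation nrm := (bfs_nrm Y).
Implicit Types x y : nat -> R.

Lemma opnorm_ub {S x} : is_op Y S -> c0 x -> c0norm x <= 1 -> nrm (S x) <= opnorm Y S.
Proof.
move=> [_ [_ [M HM]]] cx nx; apply: ub_le_sup; last by exists x.
exists `|M| => _ [z [cz nz] <-].
apply: (le_trans (HM z cz)); rewrite (le_trans (ler_wpM2r _ (ler_norm M))) //.
  exact: c0norm_ge0.
by rewrite -[X in _ <= X]mulr1 ler_wpM2l.
Qed.

Lemma opnorm_le {S} (b : R) :
  (forall x, c0 x -> c0norm x <= 1 -> nrm (S x) <= b) -> opnorm Y S <= b.
Proof.
move=> H; apply: ge_sup; last by move=> _ [z [cz nz] <-]; apply: H.
exists (nrm (S (fun _ => 0))), (fun _ => 0) => //.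
by split; [exact: c0_cst0 | apply: c0norm_le => n; rewrite normr0].
Qed.

Context {S : (nat -> R) -> T -> R}.
Hypotheses (hS : is_op Y S) (hP : is_pos_op (mu := mu) S).

Lemma S_mem {x} : c0 x -> bfs_mem Y (S x).
Proof. by case: hS => h _; apply: h. Qed.

Lemma S_lin a b {x y} : c0 x -> c0 y ->
  {ae mu, forall w, S (fun n => a * x n + b * y n) w = a * S x w + b * S y w}.
Proof. by case: hS => _ [h _]; apply: h. Qed.

Lemma S_add {x y} : c0 x -> c0 y ->
  {ae mu, forall w, S (fun n => x n + y n) w = S x w + S y w}.
Proof.
move=> cx cy; have := S_lin 1 1 cx cy.
under [fun n => _ + _]funext => n do rewrite !mul1r.
by apply: filterS => w; rewrite !mul1r.
Qed.

Lemma S_sub {x y} : c0 x -> c0 y ->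
  {ae mu, forall w, S (fun n => x n - y n) w = S x w - S y w}.
Proof.
move=> cx cy; have := S_lin 1 (-1) cx cy.
under [fun n => _ + _]funext => n do rewrite mul1r mulN1r.
by apply: filterS => w; rewrite mul1r mulN1r.
Qed.

Lemma S_scale a {x} : c0 x -> {ae mu, forall w, S (fun n => a * x n) w = a * S x w}.
Proof.
move=> cx; have := S_lin a 0 cx cx.
under [fun n => _ + _]funext => n do rewrite mul0r addr0.
by apply: filterS => w; rewrite mul0r addr0.
Qed.

Lemma S_le {x y} : c0 x -> c0 y -> (forall n, x n <= y n) ->
  {ae mu, forall w, S x w <= S y w}.
Proof.
move=> cx cy xy; have yx0 n : 0 <= y n - x n by rewrite subr_ge0.
apply: filterS2 (hP _ (c0B cy cx) yx0) (S_sub cy cx) => w h e.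
by rewrite -subr_ge0 -e.
Qed.

Lemma S_abs_le {x y} : c0 x -> c0 y -> (forall n, `|x n| <= y n) ->
  {ae mu, forall w, `|S x w| <= S y w}.
Proof.
move=> cx cy xy.
have xy' n : x n <= y n /\ -1 * x n <= y n.
  by have := xy n; rewrite mulN1r ler_norml => /andP[? ?]; split; lra.
apply: filterS3 (S_le cx cy (fun n => (xy' n).1))
  (S_le (c0Z (-1) cx) cy (fun n => (xy' n).2)) (S_scale (-1) cx) => w le1 + e.
by rewrite e ler_norml => le2; apply/andP; split; lra.
Qed.

Lemma nrm_S_le_normr {x} : c0 x -> nrm (S x) <= nrm (S (fun n => `|x n|)).
Proof.
move=> cx; have cN := c0_normr cx.
apply: bfs_nrm_mono (S_mem cx) (S_mem cN) _.
by apply: filterS (S_abs_le cx cN (fun n => lexx _)) => w h; rewrite (le_trans h) ?ler_norm.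
Qed.

Lemma S_abs_scale_le (a : R) {x z} : 0 <= a -> c0 x -> c0 z ->
  (forall n, a * `|x n| <= z n) -> {ae mu, forall w, a * `|S x w| <= S z w}.
Proof.
move=> a0 cx cz xz.
have axz n : `|a * x n| <= z n by rewrite normrM ger0_norm.
apply: filterS2 (S_abs_le (c0Z a cx) cz axz) (S_scale a cx) => w + e.
by rewrite e normrM ger0_norm.
Qed.

Lemma S_restr_abs_le P {x} : c0 x -> c0 (restr P (ones R)) ->
  {ae mu, forall w, `|S (restr P x) w| <= c0norm x * S (restr P (ones R)) w}.
Proof.
move=> cx cP; have xP n : `|restr P x n| <= c0norm x * restr P (ones R) n.
  by rewrite /restr /ones; case: (P n); rewrite ?mulr1 ?c0norm_ub // normr0 mulr0.
apply: filterS2 (S_abs_le (c0_restr P cx) (c0Z _ cP) xP) (S_scale (c0norm x) cP).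
by move=> w + <-.
Qed.

End PositiveOperator.

(** * The perturbed operator *)

Section Construction.
Context {R : realType} {d : measure_display} {T : measurableType d}
  {mu : {measure set T -> \bar R}} {Y : BFS mu} {S : (nat -> R) -> T -> R} {x0 : nat -> R}.
Local Notation mem := (bfs_mem Y).
Local Notation nrm := (bfs_nrm Y).
Local Notation ind P := (restr P (ones R)).
Hypotheses (hS : is_op Y S) (hP : is_pos_op (mu := mu) S) (hSn : opnorm Y S = 1)
  (cx0 : c0 x0) (nx0 : c0norm x0 = 1).
Variable rho : R.
Hypotheses (rho_gt0 : 0 < rho) (rho_le : 2 * rho <= 1).

(* [lra] does not pick up the section hypotheses on [rho]. *)
Local Ltac lra_rho := have := rho_gt0; have := rho_le; lra.

Definition Ap n := 1 - rho < x0 n.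
Definition Am n := x0 n < rho - 1.
Definition peak n := Ap n || Am n.
Definition u0 n := if Ap n then 1 else if Am n then -1 else x0 n.

Lemma x0_le1 n : `|x0 n| <= 1.
Proof. by rewrite -nx0; apply: c0norm_ub. Qed.

Lemma Ap_Am n : Ap n -> ~~ Am n.
Proof. by rewrite /Ap /Am -leNgt => h; lra_rho. Qed.

Lemma Ap_peak n : Ap n -> peak n.
Proof. by rewrite /peak => ->. Qed.

Lemma Am_peak n : Am n -> peak n.
Proof. by rewrite /peak orbC => ->. Qed.

Lemma peak_normr n : peak n -> 1 - rho < `|x0 n|.
Proof.
by case/orP; rewrite /Ap /Am => h; [rewrite ger0_norm | rewrite ltr0_norm]; lra_rho.
Qed.

Lemma off_peak_normr n : ~~ peak n -> `|x0 n| <= 1 - rho.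
Proof.
by rewrite negb_or /Ap /Am -!leNgt ler_norml => /andP[h1 h2]; apply/andP; split; lra_rho.
Qed.

Lemma c0_peak_supported z : (forall n, `|z n| <= 1) ->
  (forall n, ~~ peak n -> `|z n| <= `|x0 n|) -> c0 z.
Proof.
move=> z1 zx; apply: c0_le (c0Z (1 - rho)^-1 cx0) _ => n.
rewrite normrM gtr0_norm ?invr_gt0; last lra_rho.
rewrite mulrC ler_pdivlMr; last lra_rho.
have := normr_ge0 (z n); have := z1 n.
have : 0 < 1 - rho by lra_rho.
by case: (boolP (peak n)) => [/peak_normr | /zx]; have := rho_gt0; nra.
Qed.

Lemma c0_ind_sub_peak {P : pred nat} : (forall n, P n -> peak n) -> c0 (ind P).
Proof.
move=> Pp; apply: c0_peak_supported => n.
  by have /andP[h0 h1] := restr_ones01 R P n; rewrite ger0_norm.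
move=> np; rewrite /restr; case E: (P n); last by rewrite normr0.
by case/negP: np; apply: Pp.
Qed.

Lemma u0_le1 n : `|u0 n| <= 1.
Proof.
rewrite /u0; case: (Ap n); first by rewrite normr1.
by case: (Am n); [rewrite normrN normr1 | exact: x0_le1].
Qed.

Lemma u0_off_peak n : ~~ peak n -> u0 n = x0 n.
Proof. by rewrite /u0 /peak negb_or => /andP[/negbTE-> /negbTE->]. Qed.

Lemma normr_u0_peak n : peak n -> `|u0 n| = 1.
Proof.
by rewrite /u0 /peak; case: (Ap n) => /= [|->]; rewrite ?normrN normr1.
Qed.

Lemma c0_u0 : c0 u0.
Proof. by apply: c0_peak_supported u0_le1 _ => n /u0_off_peak->. Qed.

Lemma c0norm_u0 : c0norm u0 = 1.
Proof.
apply/le_anti/andP; split; first exact: c0norm_le u0_le1.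
have [n] := c0norm_adherent _ cx0 rho_gt0; rewrite nx0 => hn.
have pn : peak n.
  by apply: contraT => /off_peak_normr; lra.
by rewrite -(normr_u0_peak _ pn); exact: c0norm_ub n c0_u0.
Qed.

Lemma c0norm_u0_sub_x0 : c0norm (fun n => u0 n - x0 n) <= rho.
Proof.
apply: c0norm_le => n; have := x0_le1 n.
rewrite /u0 /Ap /Am ler_norml => /andP[h1 h2].
case: ifPn => h3; first by rewrite ger0_norm; lra_rho.
case: ifPn => h4; first by rewrite ler0_norm; lra_rho.
by rewrite subrr normr0 ltW.
Qed.

Lemma c0_ind_Ap : c0 (ind Ap).
Proof. exact: c0_ind_sub_peak Ap_peak. Qed.

Lemma c0_ind_Am : c0 (ind Am).
Proof. exact: c0_ind_sub_peak Am_peak. Qed.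

Lemma c0_ind_peak : c0 (ind peak).
Proof. exact: c0_ind_sub_peak. Qed.

(* The indicator of [S x0 >= 0], written through [S x0 = S x0^+ - S x0^-] a.e. *)
Definition chi_pos w : R := if S x0^\- w <= S x0^\+ w then 1 else 0.
Definition chi_neg w : R := if S x0^\- w <= S x0^\+ w then 0 else 1.

Lemma measurable_chi : measurable_fun setT chi_pos /\ measurable_fun setT chi_neg.
Proof.
have mS y : c0 y -> measurable_fun setT (S y) by move=> cy; exact/bfs_meas/(S_mem hS).
have := measurable_realfun.measurable_fun_ler (mS _ (c0_funrneg cx0)) (mS _ (c0_funrpos cx0)).
by split; apply: measurable_fun_ifT.
Qed.

Lemma chi_pos01 w : 0 <= chi_pos w <= 1.
Proof. by rewrite /chi_pos; case: ifP; rewrite ?lexx ?ler01. Qed.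

Lemma chi_neg01 w : 0 <= chi_neg w <= 1.
Proof. by rewrite /chi_neg; case: ifP; rewrite ?lexx ?ler01. Qed.

Lemma chi_posD w : chi_pos w + chi_neg w = 1.
Proof. by rewrite /chi_pos /chi_neg; case: ifP; rewrite ?addr0 ?add0r. Qed.

Definition peakS x w := chi_pos w * S (restr Ap x) w + chi_neg w * S (restr Am x) w.

Lemma restr_Ap_ind_peak : restr Ap (ind peak) = ind Ap.
Proof. by apply: funext => n; rewrite /restr /peak; case: (Ap n). Qed.

Lemma restr_Am_ind_peak : restr Am (ind peak) = ind Am.
Proof. by apply: funext => n; rewrite /restr /peak orbC; case: (Am n). Qed.

Definition c_peak := nrm (peakS (ind peak)).

Lemma mem_chi_S P {x} : c0 x ->
  mem (fun w => chi_pos w * S (restr P x) w) /\ mem (fun w => chi_neg w * S (restr P x) w).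
Proof.
have chi_le1 (chi : T -> R) w : 0 <= chi w <= 1 -> `|chi w| <= 1.
  by case/andP => h0 h1; rewrite ger0_norm.
move=> cx; split; apply: mem_mul_bounded (S_mem hS (c0_restr _ cx)).
- exact: measurable_chi.1.
- by move=> w; apply/chi_le1/chi_pos01.
- exact: measurable_chi.2.
- by move=> w; apply/chi_le1/chi_neg01.
Qed.

Lemma mem_peakS {x} : c0 x -> mem (peakS x).
Proof. by move=> cx; apply: bfs_memD; [case: (mem_chi_S Ap cx) | case: (mem_chi_S Am cx)]. Qed.

Lemma peakS_lin a b {x y} : c0 x -> c0 y ->
  {ae mu, forall w, peakS (fun n => a * x n + b * y n) w = a * peakS x w + b * peakS y w}.
Proof.
move=> cx cy; rewrite /peakS !restr_lin.
apply: filterS2 (S_lin hS a b (c0_restr Ap cx) (c0_restr Ap cy))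
  (S_lin hS a b (c0_restr Am cx) (c0_restr Am cy)) => w -> ->.
by ring.
Qed.

Lemma peakS_ge0 {x} : c0 x -> (forall n, 0 <= x n) -> {ae mu, forall w, 0 <= peakS x w}.
Proof.
move=> cx x_ge0; have xP P n : 0 <= restr P x n by rewrite /restr; case: (P n).
apply: filterS2 (hP _ (c0_restr Ap cx) (xP Ap)) (hP _ (c0_restr Am cx) (xP Am)) => w h1 h2.
have /andP[? _] := chi_pos01 w; have /andP[? _] := chi_neg01 w.
by rewrite addr_ge0 // mulr_ge0.
Qed.

Lemma peakS_abs_le {x} : c0 x ->
  {ae mu, forall w, `|peakS x w| <= c0norm x * peakS (ind peak) w}.
Proof.
move=> cx; apply: filterS2 (S_restr_abs_le hS hP Ap cx c0_ind_Ap)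
  (S_restr_abs_le hS hP Am cx c0_ind_Am) => w h1 h2.
rewrite /peakS restr_Ap_ind_peak restr_Am_ind_peak.
have /andP[p0 _] := chi_pos01 w; have /andP[q0 _] := chi_neg01 w.
apply: le_trans (ler_normD _ _) _; rewrite !normrM (ger0_norm p0) (ger0_norm q0) mulrDr.
by rewrite (mulrCA (c0norm x)) (mulrCA (c0norm x) (chi_neg w)) lerD // ler_wpM2l.
Qed.

Lemma nrm_peakS_le {x} : c0 x -> nrm (peakS x) <= c0norm x * c_peak.
Proof.
move=> cx; apply: nrm_le_scale _ (mem_peakS cx) (mem_peakS c0_ind_peak) (c0norm_ge0 cx) _.
exact: peakS_abs_le.
Qed.

Lemma normr_peakS_u0 :
  {ae mu, forall w, `|peakS u0 w| = `|peakS (ind peak) w|}.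
Proof.
have Ap_u0 : restr Ap u0 = ind Ap.
  by apply: funext => n; rewrite /restr /u0; case: (Ap n).
have Am_u0 : restr Am u0 = (fun n => -1 * ind Am n).
  apply: funext => n; rewrite /restr /u0 /ones.
  case E: (Am n); last by rewrite mulr0.
  by case F: (Ap n); [have := Ap_Am n F; rewrite E | rewrite mulr1].
apply: filterS (S_scale hS (-1) c0_ind_Am) => w e.
rewrite /peakS Ap_u0 Am_u0 e restr_Ap_ind_peak restr_Am_ind_peak /chi_pos /chi_neg.
by case: ifP => _; rewrite !mul0r ?addr0 ?add0r // !mul1r mulN1r normrN.
Qed.

Lemma nrm_peakS_u0 : nrm (peakS u0) = c_peak.
Proof.
have m1 := mem_peakS c0_u0; have m2 := mem_peakS c0_ind_peak.
rewrite /c_peak -(nrm_normr m1) -(nrm_normr m2).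
exact: nrm_ae_eq (mem_normr m1) (mem_normr m2) normr_peakS_u0.
Qed.

Lemma peakS_ind_peak_le : {ae mu, forall w, 0 <= peakS (ind peak) w <= S (ind peak) w}.
Proof.
have le_peak (P : pred nat) : (forall n, P n -> peak n) ->
    {ae mu, forall w, S (ind P) w <= S (ind peak) w}.
  move=> Pp; apply: (S_le hS hP (c0_ind_sub_peak Pp) c0_ind_peak) => n.
  by rewrite /restr /ones; case E: (P n); rewrite ?(Pp n E) //; case: (peak n).
have ind_ge0 n : 0 <= ind peak n by case/andP: (restr_ones01 R peak n).
apply: filterS3 (peakS_ge0 c0_ind_peak ind_ge0) (le_peak _ Ap_peak) (le_peak _ Am_peak).
move=> w -> h1 h2; rewrite /peakS restr_Ap_ind_peak restr_Am_ind_peak.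
have := chi_posD w; have /andP[? _] := chi_pos01 w; have /andP[? _] := chi_neg01 w.
by nra.
Qed.

Lemma c_peak_le1 : c_peak <= 1.
Proof.
apply: le_trans (_ : nrm (S (ind peak)) <= 1).
  rewrite /c_peak -[X in _ <= X]mul1r.
  apply: (nrm_le_scale 1 (mem_peakS c0_ind_peak) (S_mem hS c0_ind_peak) ler01).
  by apply: filterS peakS_ind_peak_le => w /andP[h0 h1]; rewrite mul1r ger0_norm.
rewrite -hSn; apply: opnorm_ub hS c0_ind_peak _; apply: c0norm_le => n.
by have /andP[h0 h1] := restr_ones01 R peak n; rewrite ger0_norm.
Qed.

Definition mismatch x w := chi_neg w * S (restr Ap x) w + chi_pos w * S (restr Am x) w.

Lemma mem_mismatch {x} : c0 x -> mem (mismatch x).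
Proof. by move=> cx; apply: bfs_memD; [case: (mem_chi_S Ap cx) | case: (mem_chi_S Am cx)]. Qed.

Lemma S_peak_decomp {x} : c0 x -> {ae mu, forall w,
  S x w = S (restr Ap x) w + S (restr Am x) w + S (restr (predC peak) x) w}.
Proof.
move=> cx; have cA := c0_restr Ap cx; have cB := c0_restr Am cx.
have Ex : (fun n => restr Ap x n + restr Am x n + restr (predC peak) x n) = x.
  apply: funext => n; rewrite /restr /= /peak.
  case F: (Ap n); case E: (Am n) => //=; rewrite ?addr0 ?add0r //.
  by have := Ap_Am n F; rewrite E.
have := S_add hS (c0D cA cB) (c0_restr (predC peak) cx); rewrite Ex => h.
by apply: filterS2 h (S_add hS cA cB) => w -> ->.
Qed.

Lemma peakS_sub_S {x} : c0 x -> {ae mu, forall w,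
  peakS x w - S x w = - (mismatch x w + S (restr (predC peak) x) w)}.
Proof.
move=> cx; apply: filterS (S_peak_decomp cx) => w ->.
rewrite /peakS /mismatch; have -> : chi_neg w = 1 - chi_pos w by rewrite -(chi_posD w) addrC addKr.
by ring.
Qed.

Definition overlap w := Num.min (S x0^\+ w) (S x0^\- w).

Lemma S_x0pm_ge0 : {ae mu, forall w, 0 <= S x0^\+ w /\ 0 <= S x0^\- w}.
Proof.
apply: filterS2 (hP _ (c0_funrpos cx0) (funrpos_ge0 x0)) (hP _ (c0_funrneg cx0) (funrneg_ge0 x0)).
by move=> w; split.
Qed.

Lemma overlap_ge0 : {ae mu, forall w, 0 <= overlap w}.
Proof. by apply: filterS S_x0pm_ge0 => w [? ?]; rewrite le_min; apply/andP. Qed.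

Lemma mem_overlap : mem overlap.
Proof.
have mp := S_mem hS (c0_funrpos cx0); have mn := S_mem hS (c0_funrneg cx0).
apply: (bfs_ideal mp); first exact: measurable_realfun.measurable_minr (bfs_meas mp) (bfs_meas mn).
apply: filterS S_x0pm_ge0 => w [p0 n0].
by rewrite /overlap !ger0_norm ?ge_min ?lexx // le_min p0.
Qed.

Lemma restr_Ap_le {x} n : c0 x -> c0norm x <= 1 -> (1 - rho) * `|restr Ap x n| <= x0^\+ n.
Proof.
move=> cx x1; rewrite /restr /funrpos /Ap maxEle.
case: ifPn => [hA | _]; last by rewrite normr0 mulr0; case: ifPn => //; rewrite -ltNge => /ltW.
have := le_trans (c0norm_ub n cx) x1; have := normr_ge0 (x n).
by case: ifP => h; have := rho_le; have := rho_gt0; nra.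
Qed.

Lemma restr_Am_le {x} n : c0 x -> c0norm x <= 1 -> (1 - rho) * `|restr Am x n| <= x0^\- n.
Proof.
move=> cx x1; rewrite /restr /funrneg /Am maxEle.
case: ifPn => [hA | _]; last by rewrite normr0 mulr0; case: ifPn => //; rewrite -ltNge => /ltW.
have := le_trans (c0norm_ub n cx) x1; have := normr_ge0 (x n).
by case: ifP => h; have := rho_le; have := rho_gt0; nra.
Qed.

Lemma mismatch_le {x} : c0 x -> c0norm x <= 1 ->
  {ae mu, forall w, (1 - rho) * `|mismatch x w| <= overlap w}.
Proof.
move=> cx x1; have rho1 : 0 <= 1 - rho by lra_rho.
apply: filterS2
  (S_abs_scale_le hS hP _ rho1 (c0_restr Ap cx) (c0_funrpos cx0) (fun n => restr_Ap_le n cx x1))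
  (S_abs_scale_le hS hP _ rho1 (c0_restr Am cx) (c0_funrneg cx0) (fun n => restr_Am_le n cx x1)).
move=> w hA hB; rewrite /mismatch /overlap /chi_pos /chi_neg le_min.
case: ifP => h; rewrite !mul0r ?add0r ?addr0 !mul1r.
  by rewrite hB (le_trans hB h).
by rewrite hA (le_trans hA) // ltW // ltNge h.
Qed.

Lemma off_peak_le {x} n : c0 x -> c0norm x <= 1 ->
  `|x0 n| + rho * `|restr (predC peak) x n| <= 1.
Proof.
move=> cx x1; rewrite /restr /=; case: ifPn => [/off_peak_normr h | _].
  by have := le_trans (c0norm_ub n cx) x1; have := normr_ge0 (x n); have := rho_gt0; nra.
by rewrite normr0 mulr0 addr0 x0_le1.
Qed.

Lemma nrm_peakS_sub_S_le {x} : c0 x -> c0norm x <= 1 ->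
  nrm (fun w => peakS x w - S x w) <=
  (1 - rho)^-1 * nrm overlap + nrm (S (fun n => `|restr (predC peak) x n|)).
Proof.
move=> cx x1; have cB := c0_restr (predC peak) cx.
have mB := S_mem hS cB; have mMB := bfs_memD (mem_mismatch cx) mB.
rewrite (nrm_ae_eq (memB (mem_peakS cx) (S_mem hS cx)) (memN mMB) (peakS_sub_S cx)) nrmN //.
apply: le_trans (bfs_nrmD (mem_mismatch cx) mB) _; apply: lerD.
  apply: (nrm_le_scale _ (mem_mismatch cx) mem_overlap); first by rewrite invr_ge0; lra_rho.
  by apply: filterS (mismatch_le cx x1) => w h; rewrite ler_pdivlMl //; lra_rho.
exact: nrm_S_le_normr.
Qed.

Context {delta : R -> R} {eta : R}.
Variable e1 : R.
Hypotheses (hU : unif_monotone_with Y delta) (e1_gt0 : 0 < e1)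
  (eta_delta : eta * (1 + delta e1) <= delta e1) (eta_lt1 : eta < 1)
  (hSx0 : 1 - eta < nrm (S x0)).

Lemma nrm_Sx0_gt0 : 0 < nrm (S x0).
Proof. by have := hSx0; have := eta_lt1; lra. Qed.

Lemma one_le_delta_nrm_Sx0 : 1 <= (1 + delta e1) * nrm (S x0).
Proof. by have := hU.1 _ e1_gt0; have := hSx0; have := eta_delta; have := eta_lt1; nra. Qed.

Lemma nrm_S_normr_x0_le1 : nrm (S (fun n => `|x0 n|)) <= 1.
Proof.
rewrite -hSn; apply: opnorm_ub hS (c0_normr cx0) _.
by apply: c0norm_le => n; rewrite normr_id x0_le1.
Qed.

(* Uniform monotonicity at [f], whose norm is at least [||S x0|| > 1 - eta]: a positive
   addend that keeps the sum in the unit ball is small. *)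
Lemma nrm_addend_le {f g} : mem f -> mem g ->
  {ae mu, forall w, 0 <= f w} -> {ae mu, forall w, 0 <= g w} ->
  nrm (S x0) <= nrm f -> nrm (fun w => f w + g w) <= 1 -> nrm g <= e1.
Proof.
move=> mf mg f0 g0 Sx0_le fg_le1.
have f_le1 : nrm f <= 1.
  apply: le_trans fg_le1; apply: bfs_nrm_mono mf (bfs_memD mf mg) _.
  by apply: filterS2 f0 g0 => w f0w g0w; rewrite !ger0_norm ?addr_ge0 // lerDl.
have fg_le : nrm (fun w => f w + g w) <= (1 + delta e1) * nrm f.
  apply: le_trans fg_le1 (le_trans one_le_delta_nrm_Sx0 _).
  by rewrite ler_wpM2l // addr_ge0 // ltW // hU.1.
have := unif_monotone_le hU e1_gt0 mf mg f0 g0 (lt_le_trans nrm_Sx0_gt0 Sx0_le) fg_le.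
by move/le_trans; apply; rewrite -[X in _ <= X]mulr1 ler_pM2l.
Qed.

Lemma nrm_S_off_peak_le z : c0 z -> (forall n, 0 <= z n) ->
  (forall n, `|x0 n| + rho * z n <= 1) -> nrm (S z) <= e1 / rho.
Proof.
move=> cz z0 zb; have cx := c0_normr cx0; have cs := c0D cx (c0Z rho cz).
have mZ := bfs_memZ rho (S_mem hS cz).
have sum_le1 : nrm (fun w => S (fun n => `|x0 n|) w + rho * S z w) <= 1.
  rewrite -(nrm_ae_eq (S_mem hS cs) (bfs_memD (S_mem hS cx) mZ)); last first.
    by apply: filterS2 (S_add hS cx (c0Z rho cz)) (S_scale hS rho cz) => w -> ->.
  rewrite -hSn; apply: opnorm_ub hS cs _; apply: c0norm_le => n.
  by rewrite ger0_norm ?zb // addr_ge0 // mulr_ge0 // ltW.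
have Z0 : {ae mu, forall w, 0 <= rho * S z w}.
  by apply: filterS (hP _ cz z0) => w h; rewrite mulr_ge0 // ltW.
have := nrm_addend_le (S_mem hS cx) mZ (hP _ cx (fun n => normr_ge0 _)) Z0
  (nrm_S_le_normr hS hP cx0) sum_le1.
by rewrite (bfs_nrmZ rho (S_mem hS cz)) gtr0_norm // ler_pdivlMr // mulrC.
Qed.

Lemma normr_Sx0_add_overlap :
  {ae mu, forall w, 0 <= `|S x0 w| + overlap w <= S (fun n => `|x0 n|) w}.
Proof.
have cp := c0_funrpos cx0; have cn := c0_funrneg cx0.
have := S_sub hS cp cn; have := S_add hS cp cn.
rewrite (funext (funrposBneg_at x0)) (funext (funrposDneg_at x0)) => hD hB.
apply: filterS3 hB hD S_x0pm_ge0 => w -> -> [p0 n0].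
rewrite /overlap minEle addr_ge0 ?normr_ge0 //=; last by case: ifP.
by case: ifP => h; [rewrite ler0_norm ?subr_le0 | rewrite gtr0_norm ?subr_gt0 ?ltNge ?h]; lra.
Qed.

Lemma nrm_overlap_le : nrm overlap <= e1.
Proof.
have mS := S_mem hS cx0; have mA := mem_normr mS.
apply: (nrm_addend_le mA mem_overlap (aeW mu (fun w => normr_ge0 (S x0 w))) overlap_ge0).
  by rewrite nrm_normr.
apply: le_trans nrm_S_normr_x0_le1.
apply: bfs_nrm_mono (bfs_memD mA mem_overlap) (S_mem hS (c0_normr cx0)) _.
apply: filterS normr_Sx0_add_overlap => w /andP[h0 h1].
by rewrite (ger0_norm h0) (ger0_norm (le_trans h0 h1)).
Qed.

Definition err_bound := e1 / (1 - rho) + e1 / rho.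

Lemma nrm_peakS_sub_S_err {x} : c0 x -> c0norm x <= 1 ->
  nrm (fun w => peakS x w - S x w) <= err_bound.
Proof.
move=> cx x1; apply: le_trans (nrm_peakS_sub_S_le cx x1) _; apply: lerD.
  by rewrite mulrC ler_wpM2r ?invr_ge0 ?nrm_overlap_le //; lra_rho.
apply: nrm_S_off_peak_le; first exact/c0_normr/c0_restr.
  by move=> n; exact: normr_ge0.
by move=> n; exact: off_peak_le.
Qed.

Lemma c_peak_ge : nrm (S x0) - err_bound <= c_peak.
Proof.
have mP := mem_peakS cx0; have mD := memB mP (S_mem hS cx0).
have := nrmB mP mD; under [fun w => _ - (_ - _)]funext => w do rewrite opprB addrC subrK.
have x1 : c0norm x0 <= 1 by rewrite nx0.
have := nrm_peakS_le cx0; have := nrm_peakS_sub_S_err cx0 x1.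
by rewrite nx0 mul1r; lra.
Qed.

Hypothesis eta_K : eta + err_bound < 1.

Lemma c_peak_gt0 : 0 < c_peak.
Proof. by have := c_peak_ge; have := hSx0; have := eta_K; lra. Qed.

Definition peakT x w := c_peak^-1 * peakS x w.

Lemma nrm_Tpk {x} : c0 x -> nrm (peakT x) = c_peak^-1 * nrm (peakS x).
Proof.
by move=> cx; rewrite (bfs_nrmZ _ (mem_peakS cx)) gtr0_norm // invr_gt0 c_peak_gt0.
Qed.

Lemma is_op_Tpk : is_op Y peakT.
Proof.
split; first by move=> x cx; apply/bfs_memZ/mem_peakS.
split=> [a b x y cx cy|].
  by apply: filterS (peakS_lin a b cx cy) => w; rewrite /peakT => ->; ring.
exists 1 => x cx; rewrite mul1r nrm_Tpk // ler_pdivrMl ?c_peak_gt0 // mulrC.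
exact: nrm_peakS_le.
Qed.

Lemma is_pos_op_Tpk : is_pos_op (mu := mu) peakT.
Proof.
move=> x cx x_ge0; apply: filterS (peakS_ge0 cx x_ge0) => w h.
by rewrite mulr_ge0 // invr_ge0 ltW // c_peak_gt0.
Qed.

Lemma nrm_Tpk_u0 : nrm (peakT u0) = 1.
Proof. by rewrite (nrm_Tpk c0_u0) nrm_peakS_u0 mulVf // gt_eqF // c_peak_gt0. Qed.

Lemma opnorm_Tpk : opnorm Y peakT = 1.
Proof.
apply/le_anti/andP; split.
  apply: opnorm_le => x cx x1; rewrite (nrm_Tpk cx) ler_pdivrMl ?c_peak_gt0 // mulr1.
  exact: le_trans (nrm_peakS_le cx) (ler_piMl (ltW c_peak_gt0) x1).
by rewrite -{1}nrm_Tpk_u0; apply: opnorm_ub is_op_Tpk c0_u0 _; rewrite c0norm_u0.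
Qed.

Lemma opnorm_Tpk_sub_S : opnorm Y (fun x w => peakT x w - S x w) <= eta + 2 * err_bound.
Proof.
apply: opnorm_le => x cx x1; have cp := c_peak_gt0.
have mP := mem_peakS cx; have mD := memB mP (S_mem hS cx).
have -> : (fun w => peakT x w - S x w) =
    (fun w => (c_peak^-1 - 1) * peakS x w + (peakS x w - S x w)).
  by apply: funext => w; rewrite /peakT; ring.
apply: le_trans (bfs_nrmD (bfs_memZ _ mP) mD) _.
have ci1 : 0 <= c_peak^-1 - 1 by rewrite subr_ge0 invf_ge1 // c_peak_le1.
have e : (c_peak^-1 - 1) * c_peak = 1 - c_peak by rewrite mulrBl mulVf ?gt_eqF // mul1r.
have h1 : (c_peak^-1 - 1) * nrm (peakS x) <= 1 - c_peak.
  rewrite -e; apply: ler_wpM2l ci1 _ _ _.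
  exact: le_trans (nrm_peakS_le cx) (ler_piMl (ltW cp) x1).
rewrite bfs_nrmZ // ger0_norm //.
by have := nrm_peakS_sub_S_err cx x1; have := c_peak_ge; have := hSx0; lra.
Qed.

Lemma BPB_witness : exists (u : nat -> R) (Op : (nat -> R) -> T -> R),
  c0 u /\ c0norm u = 1 /\ is_op Y Op /\ is_pos_op (mu := mu) Op /\ opnorm Y Op = 1 /\
  nrm (Op u) = 1 /\ c0norm (fun n => u n - x0 n) <= rho /\
  opnorm Y (fun x w => Op x w - S x w) <= eta + 2 * err_bound.
Proof.
exists u0, peakT.
split; first exact: c0_u0.
split; first exact: c0norm_u0.
split; first exact: is_op_Tpk.
split; first exact: is_pos_op_Tpk.
split; first exact: opnorm_Tpk.
split; first exact: nrm_Tpk_u0.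
split; first exact: c0norm_u0_sub_x0.
exact: opnorm_Tpk_sub_S.
Qed.

End Construction.

(* The construction is run with [rho = e / 2] and uniform monotonicity at [e^2 / 20]. *)
Definition bpb_eta {R : realType} (delta : R -> R) (e : R) : R :=
  Num.min (e / 4) (delta (e ^+ 2 / 20) / (1 + delta (e ^+ 2 / 20))).

Section Eta.
Context {R : realType} (delta : R -> R) (e : R).
Hypotheses (delta_gt0 : 0 < delta (e ^+ 2 / 20)) (e_gt0 : 0 < e).

Lemma bpb_eta_gt0 : 0 < bpb_eta delta e.
Proof. by rewrite /bpb_eta lt_min !divr_gt0 // ltr_wpDr // ltW. Qed.

Lemma bpb_eta_le : bpb_eta delta e <= e / 4.
Proof. by rewrite /bpb_eta ge_min lexx. Qed.

Lemma bpb_eta_delta : bpb_eta delta e * (1 + delta (e ^+ 2 / 20)) <= delta (e ^+ 2 / 20).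
Proof.
rewrite -ler_pdivlMr; first by rewrite /bpb_eta ge_min lexx orbT.
by rewrite ltr_wpDr // ltW.
Qed.

End Eta.

Lemma err_bound_le {R : realType} (e : R) : 0 < e -> e < 1 ->
  err_bound (e / 2) (e ^+ 2 / 20) <= e / 5.
Proof.
move=> e0 e1; rewrite /err_bound.
have -> : e ^+ 2 / 20 / (e / 2) = e / 10 by field; rewrite gt_eqF.
have : e ^+ 2 / 20 / (1 - e / 2) <= e / 10.
  by rewrite ler_pdivrMr; [rewrite expr2; nra | lra].
lra.
Qed.

Lemma BPBp_pos_c0 {R : realType} {d : measure_display} {T : measurableType d}
    {mu : {measure set T -> \bar R}} (Y : BFS mu) (delta : R -> R) :
  unif_monotone_with Y delta -> BPBp_pos_with Y (bpb_eta delta).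
Proof.
move=> hU e /andP[e0 e1] S x0 hS hP hSn cx0 nx0 hSx0.
have e1_gt0 : 0 < e ^+ 2 / 20 by rewrite divr_gt0 // exprn_gt0.
have rho_gt0 : 0 < e / 2 by rewrite divr_gt0.
have rho_le : 2 * (e / 2) <= 1 by lra.
have := bpb_eta_le delta e; have := err_bound_le _ e0 e1 => K_e eta_e.
have eta_lt1 : bpb_eta delta e < 1 by lra.
have eta_K : bpb_eta delta e + err_bound (e / 2) (e ^+ 2 / 20) < 1 by lra.
have [u [Op [cu [nu [hO [hOp [hOn [hOu [hux hOS]]]]]]]]] := BPB_witness hS hP hSn cx0 nx0
  _ rho_gt0 rho_le _ hU e1_gt0 (bpb_eta_delta _ _ (hU.1 _ e1_gt0)) eta_lt1 hSx0 eta_K.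
exists u, Op; do 6!split => //; split; lra.
Qed.

Theorem theorem3p2 (R : realType) (delta : R -> R) :
  (forall e : R, 0 < e -> 0 < delta e) ->
  exists eta : R -> R,
    (forall e : R, 0 < e < 1 -> 0 < eta e < e) /\
    forall (d : measure_display) (T : measurableType d)
           (mu : {measure set T -> \bar R}) (Y : BFS mu),
      unif_monotone_with Y delta -> BPBp_pos_with Y eta.
Proof.
move=> delta_gt0; exists (bpb_eta delta); split; last by move=> *; exact: BPBp_pos_c0.
move=> e /andP[e0 e1]; have e1_gt0 : 0 < e ^+ 2 / 20 by rewrite divr_gt0 // exprn_gt0.
rewrite bpb_eta_gt0 ?delta_gt0 //=; have := bpb_eta_le delta e; lra.
Qed.
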